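(* Let $\mathscr A$ be an additive category and $n\ge 2$. Let $X_0\xrightarrow{f_0}X_1\xrightarrow{f_1}X_2\xrightarrow{f_2}\cdots\xrightarrow{f_{n-1}}X_n$ and $X_0\xrightarrow{f_0}X_1\xrightarrow{g_1}X'_2\xrightarrow{g_2}\cdots\xrightarrow{g_{n-1}}X'_n$ be sequences of morphisms, and put $g_0:=f_0$. Let $\varphi_k\colon X_k\to X'_k$ for $2\le k\le n$ be morphisms with $\varphi_2f_1=g_1$ and $\varphi_{k+1}f_k=g_k\varphi_k$ for $2\le k\le n-1$; that is, together with $\varphi_0=\mathrm{id}_{X_0}$ and $\varphi_1=\mathrm{id}_{X_1}$ they form a commutative ladder. Assume: (i) $f_i$ is a weak cokernel of $f_{i-1}$ for $1\le i\le n-1$; (ii) $g_i$ is a weak cokernel of $g_{i-1}$ for $1\le i\le n-1$; (iii) $f_2,\dots,f_{n-1}$ and $g_2,\dots,g_{n-1}$ lie in the radical of $\mathscr A$. Then $\varphi_2,\dots,\varphi_{n-1}$ are isomorphisms.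
   Context: Composition of $f\colon X\to Y$ and $g\colon Y\to Z$ is written $gf$. A morphism $g$ is a weak cokernel of $f$ if $gf=0$ and every $h$ with $hf=0$ factors through $g$. The radical of an additive category is $\operatorname{rad}(X,Y)=\{f\colon X\to Y\mid \mathrm{id}_X-hf \text{ is invertible for all } h\colon Y\to X\}$. *)

From HB Require Import structures.
From mathcomp Require Import all_boot all_order all_algebra.
Set Implicit Arguments. Unset Strict Implicit. Unset Printing Implicit Defensive.
Import GRing.Theory.
Local Open Scope ring_scope.

Record AddCat := {
  Ob : Type;
  Mor : Ob -> Ob -> zmodType;
  (* cmp g f = g ∘ f  (the paper writes gf) *)
  cmp : forall X Y Z : Ob, Mor Y Z -> Mor X Y -> Mor X Z;
  idm : forall X : Ob, Mor X X;
  compA : forall (W X Y Z : Ob) (h : Mor Y Z) (g : Mor X Y) (f : Mor W X),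
      cmp h (cmp g f) = cmp (cmp h g) f;
  comp1m : forall (X Y : Ob) (f : Mor X Y), cmp (idm Y) f = f;
  compm1 : forall (X Y : Ob) (f : Mor X Y), cmp f (idm X) = f;
  compDl : forall (X Y Z : Ob) (g1 g2 : Mor Y Z) (f : Mor X Y),
      cmp (g1 + g2) f = cmp g1 f + cmp g2 f;
  compDr : forall (X Y Z : Ob) (g : Mor Y Z) (f1 f2 : Mor X Y),
      cmp g (f1 + f2) = cmp g f1 + cmp g f2;
  zero_object : exists Z : Ob,
      forall X : Ob, (forall u : Mor X Z, u = 0) /\ (forall v : Mor Z X, v = 0);
  biproducts : forall X Y : Ob, exists (P : Ob)
      (i1 : Mor X P) (i2 : Mor Y P) (p1 : Mor P X) (p2 : Mor P Y),
      [/\ cmp p1 i1 = idm X, cmp p2 i2 = idm Y,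
          cmp p1 i2 = 0, cmp p2 i1 = 0 &
          cmp i1 p1 + cmp i2 p2 = idm P]
}.

Arguments Mor : clear implicits.
Arguments Ob : clear implicits.
Arguments cmp {a X Y Z}.
Arguments idm {a}.

Section Notions.
Variable C : AddCat.

Definition is_iso (X Y : Ob C) (f : Mor C X Y) : Prop :=
  exists g : Mor C Y X, cmp g f = idm X /\ cmp f g = idm Y.

Definition weak_cokernel (X Y Z : Ob C) (g : Mor C Y Z) (f : Mor C X Y) : Prop :=
  cmp g f = 0 /\
  forall (W : Ob C) (h : Mor C Y W), cmp h f = 0 ->
    exists u : Mor C Z W, h = cmp u g.

Definition in_radical (X Y : Ob C) (f : Mor C X Y) : Prop :=
  forall h : Mor C Y X, is_iso (idm X - cmp h f).

(* The second sequence X_0, X_1, X'_2, X'_3, ... : it shares X_0 and X_1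
   with the first one (definitionally); X' is only used for indices >= 2. *)
Definition shared_seq (X X' : nat -> Ob C) (k : nat) : Ob C :=
  match k with 0 => X 0%N | 1 => X 1%N | _ => X' k end.
End Notions.

Arguments is_iso {C X Y}.
Arguments weak_cokernel {C X Y Z}.
Arguments in_radical {C X Y}.

From Pilot Require Import Defs.
From mathcomp Require Import all_boot all_order all_algebra.
Import GRing.Theory.
Local Open Scope ring_scope.

(* Complete the ladder with the identities phi_0 = id_{X_0} and
   phi_1 = id_{X_1}; then it suffices to show that in ANY commutative ladder
   whose first two rungs are isomorphisms, whose rows are weak-cokernel
   sequences with radical maps from index 2 on, all rungs are isomorphisms.
   This goes by induction, one rung at a time (lemma [ladder_step]): if
   phi_{k-1} and phi_k are invertible, then f_k phi_k^-1 kills g_{k-1}, so it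
   factors as w g_k through the weak cokernel g_k.  The endomorphisms
   w phi_{k+1} of X_{k+1} and phi_{k+1} w of Y_{k+1} fix f_k resp. g_k, and an
   endomorphism fixing a map whose weak cokernel lies in the radical is an
   isomorphism ([radical_fixing_endo_iso]).  Hence phi_{k+1} has a left and a
   right inverse up to isomorphisms, so it is an isomorphism. *)

Section AdditiveCategoryFacts.
Context {C : AddCat}.

Lemma cmp0l (X Y Z : Ob C) (f : Mor C X Y) : cmp (0 : Mor C Y Z) f = 0.
Proof.
have := compDl (0 : Mor C Y Z) 0 f; rewrite addr0 => H.
by apply: (addrI (cmp (0 : Mor C Y Z) f)); rewrite addr0 -H.
Qed.

Lemma cmpNl (X Y Z : Ob C) (g : Mor C Y Z) (f : Mor C X Y) :
  cmp (- g) f = - cmp g f.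
Proof.
have := compDl g (- g) f; rewrite subrr cmp0l => H.
by apply: (addrI (cmp g f)); rewrite -H subrr.
Qed.

Lemma cmpBl (X Y Z : Ob C) (g1 g2 : Mor C Y Z) (f : Mor C X Y) :
  cmp (g1 - g2) f = cmp g1 f - cmp g2 f.
Proof. by rewrite compDl cmpNl. Qed.

Lemma idm_iso (X : Ob C) : is_iso (idm X).
Proof. by exists (idm X); rewrite comp1m. Qed.

Lemma iso_of_inverses (A B : Ob C) (p : Mor C A B) (a b : Mor C B A) :
  cmp a p = idm A -> cmp p b = idm B -> is_iso p.
Proof.
move=> ap_id pb_id; exists a; split => //.
have -> : a = b by rewrite -[a]compm1 -pb_id Defs.compA ap_id comp1m.
exact: pb_id.
Qed.

Lemma iso_of_iso_composites {A B : Ob C} (p : Mor C A B) (q : Mor C B A) :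
  is_iso (cmp q p) -> is_iso (cmp p q) -> is_iso p.
Proof.
move=> [s [s_qp _]] [t [_ pq_t]].
apply: (@iso_of_inverses _ _ p (cmp s q) (cmp q t)).
  by rewrite -Defs.compA.
by rewrite Defs.compA.
Qed.

Lemma inverse_square {A A2 B B2 : Ob C} {a : Mor C A A2} {b : Mor C B B2}
    {u : Mor C A B} {u2 : Mor C A2 B2} {v : Mor C B A} {v2 : Mor C B2 A2} :
  cmp u2 a = cmp b u -> cmp u v = idm B -> cmp v2 u2 = idm A2 ->
  cmp v2 b = cmp a v.
Proof.
move=> sq uv v2u2.
by rewrite -[cmp v2 b]compm1 -uv !Defs.compA -(Defs.compA v2) -sq
           Defs.compA v2u2 comp1m.
Qed.

(* Key fact: if the weak cokernel a' of a lies in the radical, every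
   endomorphism e with e a = a is an isomorphism, since id - e kills a and so
   factors through a', i.e. e = id - u a' for some u. *)
Lemma radical_fixing_endo_iso {P A A2 : Ob C} {a : Mor C P A} {a' : Mor C A A2}
    {e : Mor C A A} :
  in_radical a' -> weak_cokernel a' a -> cmp e a = a -> is_iso e.
Proof.
move=> a'_rad [_ a'_weak] ea.
have kill : cmp (idm A - e) a = 0 by rewrite cmpBl comp1m ea subrr.
have [u Hu] := a'_weak _ (idm A - e) kill.
by have := a'_rad u; rewrite -Hu opprB addrC subrK.
Qed.

Lemma ladder_step {A0 A A2 A3 B0 B B2 B3 : Ob C}
    {a0 : Mor C A0 A} {a : Mor C A A2} {a' : Mor C A2 A3}
    {b0 : Mor C B0 B} {b : Mor C B B2} {b' : Mor C B2 B3}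
    {u : Mor C A0 B0} {phi : Mor C A B} {phi2 : Mor C A2 B2} :
  is_iso u -> is_iso phi ->
  cmp phi a0 = cmp b0 u -> cmp phi2 a = cmp b phi ->
  cmp a a0 = 0 -> weak_cokernel b b0 ->
  in_radical a' -> weak_cokernel a' a ->
  in_radical b' -> weak_cokernel b' b ->
  is_iso phi2.
Proof.
move=> [v [_ uv]] [psi [psiphi phipsi]] sq0 sq1 aa0 [_ b_weak]
       a'_rad a'_cok b'_rad b'_cok.
have psi_b0 : cmp psi b0 = cmp a0 v := inverse_square sq0 uv psiphi.
have kill : cmp (cmp a psi) b0 = 0.
  by rewrite -Defs.compA psi_b0 Defs.compA aa0 cmp0l.
have [w Hw] := b_weak _ _ kill.
apply: (iso_of_iso_composites phi2 w).
  apply: (radical_fixing_endo_iso a'_rad a'_cok).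
  by rewrite -Defs.compA sq1 Defs.compA -Hw -Defs.compA psiphi compm1.
apply: (radical_fixing_endo_iso b'_rad b'_cok).
by rewrite -Defs.compA -Hw Defs.compA sq1 -Defs.compA phipsi compm1.
Qed.

End AdditiveCategoryFacts.

Section LadderOfWeakCokernels.
Variables (C : AddCat) (m : nat) (X Y : nat -> Ob C).
Variables (f : forall k, Mor C (X k) (X k.+1)) (g : forall k, Mor C (Y k) (Y k.+1)).
Variable L : forall k, Mor C (X k) (Y k).
Hypotheses (L0_iso : is_iso (L 0%N)) (L1_iso : is_iso (L 1%N)).
Hypothesis ladder_comm :
  forall k, (k < m)%N -> cmp (L k.+1) (f k) = cmp (g k) (L k).
Hypothesis f_cok : forall i, (i < m)%N -> weak_cokernel (f i.+1) (f i).
Hypothesis g_cok : forall i, (i < m)%N -> weak_cokernel (g i.+1) (g i).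
Hypothesis f_rad : forall i, (2 <= i)%N -> (i <= m)%N -> in_radical (f i).
Hypothesis g_rad : forall i, (2 <= i)%N -> (i <= m)%N -> in_radical (g i).

Lemma ladder_rungs_iso (k : nat) : (k <= m)%N -> is_iso (L k).
Proof.
(* Induction on pairs of consecutive rungs, as each step uses two squares. *)
suff two_rungs : forall j, (j.+1 <= m)%N -> is_iso (L j) /\ is_iso (L j.+1).
  case: k => [|k] km; first exact: L0_iso.
  by case: (two_rungs k km).
elim=> [|j IH] jm; first by split.
have [Lj_iso Lj1_iso] := IH (ltnW jm).
split => //.
have jm' : (j < m)%N := ltnW jm.
exact: (ladder_step Lj_iso Lj1_iso (ladder_comm _ jm') (ladder_comm _ jm)
  (proj1 (f_cok _ jm')) (g_cok _ jm') (f_rad j.+2 isT jm) (f_cok _ jm)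
  (g_rad j.+2 isT jm) (g_cok _ jm)).
Qed.

End LadderOfWeakCokernels.

Definition completed_ladder {C : AddCat} {X X' : nat -> Ob C}
    (phi : forall k : nat, Mor C (X k) (shared_seq X X' k)) (k : nat) :
    Mor C (X k) (shared_seq X X' k) :=
  match k return Mor C (X k) (shared_seq X X' k) with
  | 0 => idm (X 0%N)
  | 1 => idm (X 1%N)
  | k'.+2 => phi k'.+2
  end.

Theorem mainTheorem2 (C : AddCat) (n : nat) (hn : (2 <= n)%N)
  (X X' : nat -> Ob C)
  (f : forall k : nat, Mor C (X k) (X k.+1))
  (g : forall k : nat, Mor C (shared_seq X X' k) (shared_seq X X' k.+1))
  (phi : forall k : nat, Mor C (X k) (shared_seq X X' k))
  (hg0 : g 0%N = f 0%N)
  (hphi2 : cmp (phi 2%N) (f 1%N) = g 1%N)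
  (hladder : forall k : nat, (2 <= k)%N -> (k <= n.-1)%N ->
      cmp (phi k.+1) (f k) = cmp (g k) (phi k))
  (hf : forall i : nat, (i.+1 <= n.-1)%N -> weak_cokernel (f i.+1) (f i))
  (hg : forall i : nat, (i.+1 <= n.-1)%N -> weak_cokernel (g i.+1) (g i))
  (hradf : forall i : nat, (2 <= i)%N -> (i <= n.-1)%N -> in_radical (f i))
  (hradg : forall i : nat, (2 <= i)%N -> (i <= n.-1)%N -> in_radical (g i)) :
  forall k : nat, (2 <= k)%N -> (k <= n.-1)%N -> is_iso (phi k).
Proof.
have ladder_comm : forall k, (k < n.-1)%N ->
    cmp (completed_ladder phi k.+1) (f k) = cmp (g k) (completed_ladder phi k).
  case=> [|[|k]] kn /=; first by rewrite comp1m compm1 hg0.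
    by rewrite compm1 hphi2.
  exact: hladder (ltnW kn).
move=> [|[|k]] // _ kn.
exact: (@ladder_rungs_iso C n.-1 X (shared_seq X X') f g (completed_ladder phi)
  (idm_iso _) (idm_iso _) ladder_comm hf hg hradf hradg k.+2 kn).
Qed.
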